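(* Let $L$ be an Abelian group, $\mathcal{B}$ an $L$-graded algebra, and $\psi,\psi'$ bilinear forms on $L$ with $\psi(a,b)+\psi(b,a)\equiv\psi'(a,b)+\psi'(b,a)\pmod 2$ for all $a,b\in L$. Let $V\subset\mathcal{B}$ be an $L$-graded subspace. Let $\mathfrak{g}$ be the Lie subalgebra generated by $V$ for the commutator bracket $[-,-]_\psi$ of the $\psi$-twisted multiplication, and $\mathfrak{g}'$ the Lie subalgebra generated by $V$ for the commutator bracket $[-,-]_{\psi'}$ of the $\psi'$-twisted multiplication. Then $\mathfrak{g}=\mathfrak{g}'$ as vector subspaces of $\mathcal{B}$.
   Context: For a bilinear form $\psi$ on $L$, the $\psi$-twisted multiplication on $\mathcal{B}$ is $m^\psi_{a,b}=(-1)^{\psi(a,b)}m_{a,b}$ on homogeneous elements of degrees $a,b$, and $[x,y]_\psi=m^\psi(x,y)-m^\psi(y,x)$. *)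

From mathcomp Require Import all_boot all_order all_algebra.
Set Implicit Arguments.
Unset Strict Implicit.
Unset Printing Implicit Defensive.
Import GRing.Theory.
Local Open Scope ring_scope.

Section GradedDefs.
Variables (k : fieldType) (B : lmodType k).

Definition is_subspace (W : B -> Prop) : Prop :=
  W 0 /\ forall (c : k) (x y : B), W x -> W y -> W (c *: x + y).

Definition is_bilinear (f : B -> B -> B) : Prop :=
  (forall (c : k) (x y z : B), f (c *: x + y) z = c *: f x z + f y z) /\
  (forall (c : k) (x y z : B), f z (c *: x + y) = c *: f z x + f z y).

Variable L : zmodType.

(* G a is the degree-a homogeneous component; B = (+)_{a in L} G a *)
Definition is_grading (G : L -> B -> Prop) : Prop :=
  [/\ forall a, is_subspace (G a),
      (forall x : B, exists (s : seq L) (f : L -> B),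
          [/\ uniq s, forall a, G a (f a) & x = \sum_(a <- s) f a])
    & forall (s : seq L) (f : L -> B), uniq s -> (forall a, G a (f a)) ->
        \sum_(a <- s) f a = 0 -> forall a, a \in s -> f a = 0].

(* (B, m) is an L-graded algebra with grading G (no associativity assumed) *)
Definition is_graded_algebra (G : L -> B -> Prop) (m : B -> B -> B) : Prop :=
  [/\ is_grading G, is_bilinear m &
      forall a b x y, G a x -> G b y -> G (a + b) (m x y)].

Definition is_graded_subspace (G : L -> B -> Prop) (V : B -> Prop) : Prop :=
  is_subspace V /\
  forall v, V v -> exists (s : seq L) (f : L -> B),
      [/\ uniq s, forall a, G a (f a) /\ V (f a) & v = \sum_(a <- s) f a].

Definition is_bilinear_form (psi : L -> L -> int) : Prop :=
  (forall a b c, psi (a + b) c = psi a c + psi b c) /\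
  (forall a b c, psi a (b + c) = psi a b + psi a c).

Definition is_twisted_mult (G : L -> B -> Prop) (m : B -> B -> B)
    (psi : L -> L -> int) (mpsi : B -> B -> B) : Prop :=
  is_bilinear mpsi /\
  forall a b x y, G a x -> G b y -> mpsi x y = ((-1 : k) ^ (psi a b)) *: m x y.

Definition commutator (mu : B -> B -> B) (x y : B) : B := mu x y - mu y x.

Definition generated_lie_subalg (br : B -> B -> B) (V : B -> Prop) (x : B) : Prop :=
  forall W : B -> Prop, is_subspace W -> (forall v, V v -> W v) ->
    (forall y z, W y -> W z -> W (br y z)) -> W x.

End GradedDefs.

(* For homogeneous x, y of degrees a, b the two twisted brackets differ only by
   the nonzero scalar (-1)^(psi'(a,b) + psi(a,b)): the parity hypothesis makes
   the coefficients of m x y and of m y x change by the same sign.  Hence the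
   span of the homogeneous elements of one generated Lie subalgebra contains V
   and is closed under the other bracket, so each generated subalgebra is
   contained in the other. *)
From mathcomp Require Import all_boot all_order all_algebra.
Set Implicit Arguments.
Unset Strict Implicit.
Unset Printing Implicit Defensive.
Import GRing.Theory.
Local Open Scope ring_scope.

Section Subspaces.
Variables (k : fieldType) (B : lmodType k).

Lemma subspaceZ (W : B -> Prop) c y : is_subspace W -> W y -> W (c *: y).
Proof. by move=> [W0 WD] Wy; rewrite -[_ *: _]addr0; apply: WD. Qed.

Lemma subspace_lincomb (W : B -> Prop) c d x y :
  is_subspace W -> W x -> W y -> W (c *: x + d *: y).
Proof. by move=> Wsub Wx Wy; apply: Wsub.2 Wx (subspaceZ d Wsub Wy). Qed.

Lemma subspace_sum (W : B -> Prop) (r : seq B) (F : B -> B) :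
  is_subspace W -> (forall y, y \in r -> W (F y)) -> W (\sum_(y <- r) F y).
Proof.
move=> [W0 WD]; elim: r => [|y r IH] Wr; first by rewrite big_nil.
rewrite big_cons -[F y]scale1r; apply: WD; first by apply: Wr; rewrite mem_head.
by apply: IH => u ur; apply: Wr; rewrite in_cons ur orbT.
Qed.

Definition span_of (P : B -> Prop) (x : B) : Prop :=
  exists2 r : seq B, (forall y, y \in r -> P y) & x = \sum_(y <- r) y.

Lemma span_of_mem (P : B -> Prop) y : P y -> span_of P y.
Proof. by move=> Py; exists [:: y]; [move=> u; rewrite inE => /eqP -> | rewrite big_seq1]. Qed.

Lemma span_of_subspace (P : B -> Prop) :
  (forall c y, P y -> P (c *: y)) -> is_subspace (span_of P).
Proof.
move=> PZ; split; first by exists [::]; rewrite ?big_nil.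
move=> c _ _ [r1 P1 ->] [r2 P2 ->]; exists (map ( *:%R c) r1 ++ r2).
  by move=> u; rewrite mem_cat => /orP[/mapP[v /P1 Pv ->] | /P2]; first exact: PZ.
by rewrite big_cat big_map scaler_sumr.
Qed.

Lemma span_of_min (P W : B -> Prop) :
  is_subspace W -> (forall y, P y -> W y) -> forall x, span_of P x -> W x.
Proof. by move=> Wsub PW _ [r Pr ->]; apply: (@subspace_sum W r id) => // y /Pr/PW. Qed.

End Subspaces.

Section Bilinear.
Variables (k : fieldType) (B : lmodType k) (f : B -> B -> B).
Hypothesis f_bilin : is_bilinear f.

Lemma bilinear0l z : f 0 z = 0.
Proof.
have := f_bilin.1 1 0 0 z; rewrite !scale1r addr0 => f0.
by apply: (addrI (f 0 z)); rewrite addr0.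
Qed.

Lemma bilinear0r z : f z 0 = 0.
Proof.
have := f_bilin.2 1 0 0 z; rewrite !scale1r addr0 => f0.
by apply: (addrI (f z 0)); rewrite addr0.
Qed.

Lemma bilinear_suml (r : seq B) z : f (\sum_(y <- r) y) z = \sum_(y <- r) f y z.
Proof.
elim: r => [|y r IH]; first by rewrite !big_nil bilinear0l.
by rewrite !big_cons -IH -[y in f (y + _)]scale1r f_bilin.1 scale1r.
Qed.

Lemma bilinear_sumr (r : seq B) z : f z (\sum_(y <- r) y) = \sum_(y <- r) f z y.
Proof.
elim: r => [|y r IH]; first by rewrite !big_nil bilinear0r.
by rewrite !big_cons -IH -[y in f _ (y + _)]scale1r f_bilin.2 scale1r.
Qed.

Lemma commutator_bilinear : is_bilinear (commutator f).
Proof.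
by split=> c x y z; rewrite /commutator f_bilin.1 f_bilin.2 scalerBr opprD addrACA.
Qed.

End Bilinear.

Section GeneratedLieSubalgebra.
Variables (k : fieldType) (B : lmodType k) (br : B -> B -> B) (V : B -> Prop).

Lemma generated_lie_subalg_min (W : B -> Prop) :
  is_subspace W -> (forall v, V v -> W v) ->
  (forall y z, W y -> W z -> W (br y z)) ->
  forall x, generated_lie_subalg br V x -> W x.
Proof. by move=> Wsub VW Wbr x; apply. Qed.

Lemma generated_lie_subalg_subspace : is_subspace (generated_lie_subalg br V).
Proof.
split=> [W [] //|c x y gx gy W Wsub VW Wbr].
by apply: (Wsub.2); [apply: gx Wsub VW Wbr | apply: gy Wsub VW Wbr].
Qed.

Lemma generated_lie_subalg_br y z :
  generated_lie_subalg br V y -> generated_lie_subalg br V z ->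
  generated_lie_subalg br V (br y z).
Proof.
move=> gy gz W Wsub VW Wbr.
by apply: (Wbr); [apply: gy Wsub VW Wbr | apply: gz Wsub VW Wbr].
Qed.

Lemma generated_lie_subalg_gen v : V v -> generated_lie_subalg br V v.
Proof. by move=> Vv W _ VW _; apply: VW. Qed.

End GeneratedLieSubalgebra.

Section ProportionalBrackets.
Variables (k : fieldType) (B : lmodType k) (br br' : B -> B -> B).
Variables (V hom : B -> Prop).
Hypothesis homZ : forall c y, hom y -> hom (c *: y).
Hypothesis V_span_hom : forall v, V v -> span_of (fun y => V y /\ hom y) v.
Hypothesis br'_bilin : is_bilinear br'.
Hypothesis br_hom : forall y w, hom y -> hom w -> hom (br y w).
Hypothesis br'_proportional : forall y w, hom y -> hom w -> exists c, br' y w = c *: br y w.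

Let hom_gen y := generated_lie_subalg br V y /\ hom y.

Lemma hom_genZ c y : hom_gen y -> hom_gen (c *: y).
Proof.
move=> [gy hy]; split; last exact: homZ.
exact: subspaceZ (generated_lie_subalg_subspace br V) gy.
Qed.

Lemma span_hom_gen_br y z :
  span_of hom_gen y -> span_of hom_gen z -> span_of hom_gen (br' y z).
Proof.
have span_sub := span_of_subspace hom_genZ.
move=> [r1 g1 ->] [r2 g2 ->]; rewrite bilinear_suml //.
apply: subspace_sum => // u /g1 [gu hu]; rewrite bilinear_sumr //.
apply: subspace_sum => // w /g2 [gw hw]; apply: span_of_mem.
have [c ->] := br'_proportional hu hw; apply: hom_genZ; split; last exact: br_hom.
exact: generated_lie_subalg_br.
Qed.

Lemma generated_lie_subalg_le x :
  generated_lie_subalg br' V x -> generated_lie_subalg br V x.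
Proof.
move=> g'x; have : span_of hom_gen x.
  apply: (generated_lie_subalg_min (span_of_subspace hom_genZ) _ span_hom_gen_br) g'x.
  move=> v /V_span_hom [r Vr ->]; exists r => // y /Vr [Vy hy].
  by split=> //; apply: generated_lie_subalg_gen.
by apply: span_of_min => [|y []//]; apply: generated_lie_subalg_subspace.
Qed.

End ProportionalBrackets.

Lemma sign_sqr (k : fieldType) (z : int) : (-1 : k) ^ z * (-1) ^ z = 1.
Proof. by rewrite -expfzMl mulrNN mulr1 exp1rz. Qed.

Lemma sign_eq_mod2 (k : fieldType) (z w : int) :
  (z = w %[mod 2])%Z -> (-1 : k) ^ z = (-1) ^ w.
Proof.
move=> zw; have /dvdzP [q Hq] : (2 %| z - w)%Z by rewrite -eqz_mod_dvd; apply/eqP.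
have -> : z = w + 2 * q by rewrite mulrC -Hq addrC subrK.
have sqrN1 : (-1 : k) ^ (2 : int) = 1 := sqrr_sign k 1.
by rewrite expfzDr ?oppr_eq0 ?oner_eq0 // -exprz_exp sqrN1 exp1rz mulr1.
Qed.

Section TwistedCommutators.
Variables (k : fieldType) (L : zmodType) (B : lmodType k).
Variables (G : L -> B -> Prop) (m : B -> B -> B).
Hypothesis G_subspace : forall a, is_subspace (G a).
Hypothesis mG : forall a b x y, G a x -> G b y -> G (a + b) (m x y).

Lemma twisted_commutator_homog (psi : L -> L -> int) mpsi a b x y :
  is_twisted_mult G m psi mpsi -> G a x -> G b y ->
  G (a + b) (commutator mpsi x y).
Proof.
move=> [_ mpsiE] Gx Gy; rewrite /commutator (mpsiE _ _ _ _ Gx Gy) (mpsiE _ _ _ _ Gy Gx).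
rewrite -scaleN1r scalerA; apply: subspace_lincomb (G_subspace _) (mG Gx Gy) _.
by rewrite addrC; apply: mG Gy Gx.
Qed.

Lemma twisted_commutator_change (psi psi' : L -> L -> int) mpsi mpsi' a b x y :
  (psi a b + psi b a = psi' a b + psi' b a %[mod 2])%Z ->
  is_twisted_mult G m psi mpsi -> is_twisted_mult G m psi' mpsi' ->
  G a x -> G b y ->
  commutator mpsi' x y = ((-1) ^ psi' a b * (-1) ^ psi a b) *: commutator mpsi x y.
Proof.
move=> parity [_ mpsiE] [_ mpsi'E] Gx Gy; rewrite /commutator.
rewrite (mpsiE _ _ _ _ Gx Gy) (mpsiE _ _ _ _ Gy Gx).
rewrite (mpsi'E _ _ _ _ Gx Gy) (mpsi'E _ _ _ _ Gy Gx).
have := sign_eq_mod2 k parity; rewrite !expfzDr ?oppr_eq0 ?oner_eq0 // => signs.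
by rewrite scalerBr !scalerA -mulrA sign_sqr mulr1 -mulrA signs mulrA sign_sqr mul1r.
Qed.

Lemma generated_lie_subalg_twisted_le (psi psi' : L -> L -> int) mpsi mpsi' V x :
  (forall a b, (psi a b + psi b a = psi' a b + psi' b a %[mod 2])%Z) ->
  is_graded_subspace G V ->
  is_twisted_mult G m psi mpsi -> is_twisted_mult G m psi' mpsi' ->
  generated_lie_subalg (commutator mpsi') V x ->
  generated_lie_subalg (commutator mpsi) V x.
Proof.
move=> parity [_ V_graded] tw tw'.
apply: (@generated_lie_subalg_le _ _ _ _ _ (fun y => exists a, G a y)).
- by move=> c y [a Gy]; exists a; apply: subspaceZ.
- move=> v /V_graded [s [f [_ Vf ->]]]; exists (map f s); last by rewrite big_map.
  by move=> y /mapP [a _ ->]; have [Gf Vfa] := Vf a; split; last exists a.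
- exact: commutator_bilinear tw'.1.
- by move=> y w [a Gy] [b Gw]; exists (a + b); apply: twisted_commutator_homog tw Gy Gw.
- by move=> y w [a Gy] [b Gw]; eexists; apply: twisted_commutator_change tw tw' Gy Gw.
Qed.

End TwistedCommutators.

Theorem lemma10p11 (k : fieldType) (L : zmodType) (B : lmodType k)
    (G : L -> B -> Prop) (m : B -> B -> B)
    (psi psi' : L -> L -> int) (mpsi mpsi' : B -> B -> B) (V : B -> Prop) :
  is_graded_algebra G m ->
  is_bilinear_form psi -> is_bilinear_form psi' ->
  (forall a b, (psi a b + psi b a = psi' a b + psi' b a %[mod 2])%Z) ->
  is_graded_subspace G V ->
  is_twisted_mult G m psi mpsi -> is_twisted_mult G m psi' mpsi' ->
  forall x : B,
    generated_lie_subalg (commutator mpsi) V x <->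
    generated_lie_subalg (commutator mpsi') V x.
Proof.
move=> [[G_subspace _ _] _ mG] _ _ parity V_graded tw tw' x.
have parity' a b := esym (parity a b).
split.
  exact: (generated_lie_subalg_twisted_le G_subspace mG parity' V_graded tw' tw (x:=x)).
exact: (generated_lie_subalg_twisted_le G_subspace mG parity V_graded tw tw' (x:=x)).
Qed.
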